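(* Let $k\neq 1$ be real, and put the real Hesse curve $\mathcal{C}(k)_{\mathbb{R}}=\{x^3+y^3+z^3=3k\,xyz\}\subset\mathbb{P}^2(\mathbb{R})$ into the standard normal form $y^2=x^3+ax+b$ ($a,b\in\mathbb{R}$) by a real projective transformation. Then $b<0$ if and only if $1-\sqrt3<k<1+\sqrt3$; $b=0$ if and only if $k=1\pm\sqrt3$; and $b>0$ otherwise.
   Context: The affine equation $y^2=x^3+ax+b$ denotes the curve $-y^2z+x^3+axz^2+bz^3=0$. Real projective transformations between standard normal forms fixing $(0:1:0)$ replace $(a,b)$ by $(t^4a,t^6b)$ with $t$ real non-zero, so the sign of $b$ is well defined. *)

From HB Require Import structures.
From mathcomp Require Import all_boot all_order all_algebra.
Set Implicit Arguments. Unset Strict Implicit. Unset Printing Implicit Defensive.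
Import Order.TTheory GRing.Theory Num.Theory.
Local Open Scope ring_scope.

Definition cx {R : ringType} (v : 'cV[R]_3) : R := v (@inord 2 0) ord0.
Definition cy {R : ringType} (v : 'cV[R]_3) : R := v (@inord 2 1) ord0.
Definition cz {R : ringType} (v : 'cV[R]_3) : R := v (@inord 2 2) ord0.

Definition hesse_form {R : comRingType} (k : R) (v : 'cV[R]_3) : R :=
  cx v ^+ 3 + cy v ^+ 3 + cz v ^+ 3 - 3%:R * k * cx v * cy v * cz v.

(* The standard normal form  -y^2 z + x^3 + a x z^2 + b z^3
   (projective version of y^2 = x^3 + a x + b). *)
Definition weier_form {R : comRingType} (a b : R) (v : 'cV[R]_3) : R :=
  - cy v ^+ 2 * cz v + cx v ^+ 3 + a * cx v * cz v ^+ 2 + b * cz v ^+ 3.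

(* The real projective transformation given by the invertible matrix M
   carries the Hesse curve C(k) onto the normal form curve of (a,b):
   the pulled-back cubic equation is a nonzero multiple of the Hesse one. *)
Definition puts_in_normal_form {R : fieldType} (k : R) (M : 'M[R]_3) (a b : R) :=
  M \in unitmx /\
  exists2 lam : R, lam != 0 &
    forall v : 'cV[R]_3, hesse_form k v = lam * weier_form a b (M *m v).

(* Pull the normal-form equation back along M^-1: the images P1, P2, P3 of
   (1:0:0), (0:1:0), (0:0:1) satisfy the polar identities obtained by comparing
   coefficients.  P2 is a flex of C(k) and its Hessian matrix kills P1; as the
   Hessian determinant equals 8xyz(1 - k^3) on C(k), P2 lies on a coordinate
   line, and by cyclic symmetry P2 = (1:-1:0) up to scale.  The polar identities
   then force P1 ~ (k:k:-2) and P3 ~ (4-k^3 : 4-k^3 : -6k^2), and the constant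
   term gives b = c (k^6 - 20k^3 - 8) with c > 0.  Finally
   k^6 - 20k^3 - 8 = (k^3 - (1-sqrt 3)^3) (k^3 - (1+sqrt 3)^3). *)

From HB Require Import structures.
From mathcomp Require Import all_boot all_order all_algebra.
From mathcomp Require Import ring lra.
Set Implicit Arguments. Unset Strict Implicit. Unset Printing Implicit Defensive.
Import Order.TTheory GRing.Theory Num.Theory.
Local Open Scope ring_scope.

Lemma cubic_factor_gt0 (R : realDomainType) (x y : R) :
  y != 0 -> 0 < x ^+ 2 + x * y + y ^+ 2.
Proof.
move=> y_neq0; have y2_gt0 : 0 < y ^+ 2 by rewrite exprn_even_gt0 //= y_neq0 orbT.
by have := sqr_ge0 (2%:R * x + y); nra.
Qed.

Lemma cube_inj (R : realDomainType) : injective (fun x : R => x ^+ 3).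
Proof.
move=> x y /=; have [-> | y_neq0] := eqVneq y 0.
  by rewrite expr0n => /eqP; rewrite expf_eq0 => /andP[_ /eqP].
move/eqP; rewrite -subr_eq0.
have -> : x ^+ 3 - y ^+ 3 = (x - y) * (x ^+ 2 + x * y + y ^+ 2) by ring.
by rewrite mulf_eq0 (gt_eqF (cubic_factor_gt0 x y_neq0)) orbF subr_eq0 => /eqP.
Qed.

Lemma dot2_eq0 (R : fieldType) (al be x y : R) :
  (al, be) != (0, 0) -> al * x + be * y = 0 -> exists t, x = t * be /\ y = - (t * al).
Proof.
have [al0|al0] := eqVneq al 0.
  rewrite al0 xpair_eqE eqxx /= mul0r add0r => be0 /eqP.
  rewrite mulf_eq0 (negPf be0) => /eqP ->.
  by exists (x / be); rewrite divfK // mulr0 oppr0.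
move=> _ dot0; have ax : al * x = - (be * y) by apply/eqP; rewrite -addr_eq0 dot0.
exists (- (y / al)); split; last by field.
by rewrite -(mulKf al0 x) ax; field.
Qed.

Definition det3 {R : comPzRingType} (a b c d e f g h i : R) : R :=
  a * (e * i - f * h) - b * (d * i - f * g) + c * (d * h - e * g).

Lemma det3_kernel (R : comPzRingType) (a b c d e f g h i x y z : R) :
  a * x + b * y + c * z = 0 -> d * x + e * y + f * z = 0 -> g * x + h * y + i * z = 0 ->
  [/\ det3 a b c d e f g h i * x = 0, det3 a b c d e f g h i * y = 0
    & det3 a b c d e f g h i * z = 0].
Proof.
move=> r1 r2 r3; split.
- transitivity ((e * i - f * h) * (a * x + b * y + c * z)
    - (b * i - c * h) * (d * x + e * y + f * z) + (b * f - c * e) * (g * x + h * y + i * z)).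
    by rewrite /det3; ring.
  by rewrite r1 r2 r3; ring.
- transitivity (- (d * i - f * g) * (a * x + b * y + c * z)
    + (a * i - c * g) * (d * x + e * y + f * z) - (a * f - c * d) * (g * x + h * y + i * z)).
    by rewrite /det3; ring.
  by rewrite r1 r2 r3; ring.
- transitivity ((d * h - e * g) * (a * x + b * y + c * z)
    - (a * h - b * g) * (d * x + e * y + f * z) + (a * e - b * d) * (g * x + h * y + i * z)).
    by rewrite /det3; ring.
  by rewrite r1 r2 r3; ring.
Qed.

Lemma ternary_cubic_eq0 (R : realFieldType)
    (c300 c030 c003 c210 c201 c120 c021 c102 c012 c111 : R) :
  (forall x y z : R, c300 * x ^+ 3 + c030 * y ^+ 3 + c003 * z ^+ 3
     + c210 * x ^+ 2 * y + c201 * x ^+ 2 * z + c120 * y ^+ 2 * x + c021 * y ^+ 2 * z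
     + c102 * z ^+ 2 * x + c012 * z ^+ 2 * y + c111 * x * y * z = 0) ->
  [/\ [/\ c300 = 0, c030 = 0 & c003 = 0],
      [/\ c210 = 0, c201 = 0, c120 = 0, c021 = 0 & c102 = 0] & c012 = 0 /\ c111 = 0].
Proof.
move=> cubic0.
have := cubic0 1 0 0; have := cubic0 0 1 0; have := cubic0 0 0 1.
have := cubic0 1 1 0; have := cubic0 1 (-1) 0; have := cubic0 1 0 1.
have := cubic0 1 0 (-1); have := cubic0 0 1 1; have := cubic0 0 1 (-1).
have := cubic0 1 1 1.
rewrite !(expr0n, expr1n, mul0r, mulr0, mul1r, mulr1, addr0, add0r, sqrrN, exprN1).
move=> *; split; [split | split | split]; lra.
Qed.

Definition hesse {R : comPzRingType} (k x y z : R) : R :=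
  x ^+ 3 + y ^+ 3 + z ^+ 3 - 3%:R * k * x * y * z.

(* Normalised so that [hesse_polar k P P P = 2 * hesse k P]. *)
Definition hesse_polar {R : comPzRingType} (k x1 y1 z1 x2 y2 z2 x3 y3 z3 : R) : R :=
  2%:R * (x1 * x2 * x3 + y1 * y2 * y3 + z1 * z2 * z3)
  - k * (x1 * y2 * z3 + x1 * z2 * y3 + y1 * x2 * z3 + y1 * z2 * x3 + z1 * x2 * y3 + z1 * y2 * x3).

Definition weier {R : comPzRingType} (a b x y z : R) : R :=
  - y ^+ 2 * z + x ^+ 3 + a * x * z ^+ 2 + b * z ^+ 3.

(* The points [Pj = (pj : qj : rj)] are the images of the coordinate points
   [(1:0:0)], [(0:1:0)], [(0:0:1)] of the normal form. *)
Definition hesse_to_weier {R : comPzRingType} (k lam a b p1 q1 r1 p2 q2 r2 p3 q3 r3 : R) :=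
  forall w0 w1 w2 : R,
    hesse k (p1 * w0 + p2 * w1 + p3 * w2) (q1 * w0 + q2 * w1 + q3 * w2)
            (r1 * w0 + r2 * w1 + r3 * w2)
    = lam * weier a b w0 w1 w2.

Definition noncollinear {R : pzRingType} (p1 q1 r1 p2 q2 r2 p3 q3 r3 : R) :=
  forall u1 u2 u3 : R,
    u1 * p1 + u2 * q1 + u3 * r1 = 0 -> u1 * p2 + u2 * q2 + u3 * r2 = 0 ->
    u1 * p3 + u2 * q3 + u3 * r3 = 0 -> [/\ u1 = 0, u2 = 0 & u3 = 0].

Section NormalFrame.

Context {R : realFieldType} {k lam a b p1 q1 r1 p2 q2 r2 p3 q3 r3 : R}.
Hypothesis to_weier : hesse_to_weier k lam a b p1 q1 r1 p2 q2 r2 p3 q3 r3.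

Lemma hesse_to_weier_coef :
  [/\ [/\ hesse k p1 q1 r1 = lam, hesse k p2 q2 r2 = 0 & hesse k p3 q3 r3 = lam * b],
      [/\ hesse_polar k p1 q1 r1 p1 q1 r1 p2 q2 r2 = 0,
          hesse_polar k p1 q1 r1 p1 q1 r1 p3 q3 r3 = 0,
          hesse_polar k p2 q2 r2 p2 q2 r2 p1 q1 r1 = 0,
          3%:R * hesse_polar k p2 q2 r2 p2 q2 r2 p3 q3 r3 = - 2%:R * lam &
          3%:R * hesse_polar k p3 q3 r3 p3 q3 r3 p1 q1 r1 = 2%:R * lam * a]
    & hesse_polar k p3 q3 r3 p3 q3 r3 p2 q2 r2 = 0
      /\ hesse_polar k p1 q1 r1 p2 q2 r2 p3 q3 r3 = 0].
Proof.
have := @ternary_cubic_eq0 R (2%:R * hesse k p1 q1 r1 - 2%:R * lam) (2%:R * hesse k p2 q2 r2)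
    (2%:R * hesse k p3 q3 r3 - 2%:R * lam * b)
    (3%:R * hesse_polar k p1 q1 r1 p1 q1 r1 p2 q2 r2)
    (3%:R * hesse_polar k p1 q1 r1 p1 q1 r1 p3 q3 r3)
    (3%:R * hesse_polar k p2 q2 r2 p2 q2 r2 p1 q1 r1)
    (3%:R * hesse_polar k p2 q2 r2 p2 q2 r2 p3 q3 r3 + 2%:R * lam)
    (3%:R * hesse_polar k p3 q3 r3 p3 q3 r3 p1 q1 r1 - 2%:R * lam * a)
    (3%:R * hesse_polar k p3 q3 r3 p3 q3 r3 p2 q2 r2)
    (6%:R * hesse_polar k p1 q1 r1 p2 q2 r2 p3 q3 r3).
case=> [x y z | [c300 c030 c003] [c210 c201 c120 c021 c102] [c012 c111]].
  rewrite -(mulr0 2%:R) -(subrr (lam * weier a b x y z)) -{1}to_weier.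
  by rewrite /hesse /hesse_polar /weier; ring.
by split; [split | split | split]; lra.
Qed.

Lemma hesse_polar_P1P2_eq0 :
  noncollinear p1 q1 r1 p2 q2 r2 p3 q3 r3 ->
  forall x y z, hesse_polar k p1 q1 r1 p2 q2 r2 x y z = 0.
Proof.
have [_ [c210 _ c120 _ _] [_ c111]] := hesse_to_weier_coef.
pose u x y z := hesse_polar k p1 q1 r1 p2 q2 r2 x y z.
move=> ncol x y z.
have [u1 u2 u3] : [/\ u 1 0 0 = 0, u 0 1 0 = 0 & u 0 0 1 = 0].
  apply: ncol.
  - by rewrite -[RHS]c210 /u /hesse_polar; ring.
  - by rewrite -[RHS]c120 /u /hesse_polar; ring.
  - by rewrite -[RHS]c111 /u /hesse_polar; ring.
transitivity (u 1 0 0 * x + u 0 1 0 * y + u 0 0 1 * z).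
  by rewrite /u /hesse_polar; ring.
by rewrite u1 u2 u3; ring.
Qed.

End NormalFrame.

Lemma hesse_flex_on_axis (R : realDomainType) (k x y z p q r : R) :
  k != 1 -> hesse k x y z = 0 -> (p, q, r) != (0, 0, 0) ->
  (forall u v w, hesse_polar k p q r x y z u v w = 0) -> x * y * z = 0.
Proof.
move=> k_neq1 on_curve pqr_neq0 polar0.
pose D := det3 (2%:R * x) (- (k * z)) (- (k * y)) (- (k * z)) (2%:R * y) (- (k * x))
               (- (k * y)) (- (k * x)) (2%:R * z).
have [Dp Dq Dr] : [/\ D * p = 0, D * q = 0 & D * r = 0].
  apply: det3_kernel.
  - by rewrite -(polar0 1 0 0) /hesse_polar; ring.
  - by rewrite -(polar0 0 1 0) /hesse_polar; ring.
  - by rewrite -(polar0 0 0 1) /hesse_polar; ring.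
have D_eq0 : D = 0.
  apply/eqP; apply: contraNT pqr_neq0 => D_neq0.
  move: Dp Dq Dr => /eqP + /eqP + /eqP; rewrite !mulf_eq0 (negPf D_neq0) /=.
  by move=> /eqP-> /eqP-> /eqP->.
have k3_neq1 : 1 - k ^+ 3 != 0.
  rewrite subr_eq0 eq_sym; apply: contra k_neq1 => /eqP k3.
  by apply/eqP/cube_inj; rewrite /= k3 expr1n.
have : 8%:R * (x * y * z) * (1 - k ^+ 3) = 0.
  rewrite -D_eq0 -[RHS]addr0 -(mulr0 (2%:R * k ^+ 2)) -on_curve.
  by rewrite /D /det3 /hesse; ring.
by move/eqP; rewrite mulf_eq0 (negPf k3_neq1) orbF mulf_eq0 pnatr_eq0 => /eqP.
Qed.

Lemma hesse_to_weier_axis_P1 (R : realFieldType) (k lam a b p1 q1 r1 p2 p3 q3 r3 : R) :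
  p2 != 0 ->
  hesse_to_weier k lam a b p1 q1 r1 p2 (- p2) 0 p3 q3 r3 ->
  noncollinear p1 q1 r1 p2 (- p2) 0 p3 q3 r3 ->
  exists s, [/\ p1 = s * k, q1 = s * k & r1 = - (s * 2%:R)].
Proof.
move=> p2_neq0 to_weier ncol; have polar0 := hesse_polar_P1P2_eq0 to_weier ncol.
have [s [p1E r1E]] : exists s, p1 = s * k /\ r1 = - (s * 2%:R).
  apply: (@dot2_eq0 _ 2%:R); first by rewrite xpair_eqE pnatr_eq0.
  by apply: (mulfI p2_neq0); rewrite mulr0 -(polar0 1 0 0) /hesse_polar; ring.
exists s; split=> //.
have : p2 * (2%:R * (q1 - s * k)) = 0.
  by rewrite -oppr0 -(polar0 0 1 0) r1E /hesse_polar; ring.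
by move/eqP; rewrite !mulf_eq0 (negPf p2_neq0) pnatr_eq0 subr_eq0 => /eqP.
Qed.

Lemma hesse_to_weier_axis_b (R : realFieldType) (k lam a b p1 q1 r1 p2 q2 p3 q3 r3 : R) :
  lam != 0 ->
  hesse_to_weier k lam a b p1 q1 r1 p2 q2 0 p3 q3 r3 ->
  noncollinear p1 q1 r1 p2 q2 0 p3 q3 r3 ->
  exists2 c, 0 < c & b = c * (k ^+ 6 - 20%:R * k ^+ 3 - 8%:R).
Proof.
move=> lam_neq0 to_weier ncol.
have [[c300 c030 c003] [_ c201 _ c021 _] [c012 _]] := hesse_to_weier_coef to_weier.
have q2E : q2 = - p2.
  by apply: cube_inj; rewrite /= -[LHS]subr0 -c030 /hesse; ring.
subst q2.
have c021E : hesse_polar k p2 (- p2) 0 p2 (- p2) 0 p3 q3 r3 = 2%:R * p2 ^+ 2 * (p3 + q3 + k * r3).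
  by rewrite /hesse_polar; ring.
have p2_neq0 : p2 != 0.
  by apply: contraNneq lam_neq0 => p2_0; move: c021; rewrite c021E p2_0; lra.
have [s [p1E q1E r1E]] := hesse_to_weier_axis_P1 p2_neq0 to_weier ncol.
subst p1 q1 r1.
have s_neq0 : s != 0.
  by apply: contraNneq lam_neq0 => s0; apply/eqP; rewrite -c300 s0 /hesse; ring.
have lin_neq0 : p3 + q3 + k * r3 != 0.
  by apply: contraNneq lam_neq0 => lin0; move: c021; rewrite c021E lin0; lra.
have q3E : q3 = p3.
  have : 2%:R * p2 * (p3 - q3) * (p3 + q3 + k * r3) = 0.
    by rewrite -c012 /hesse_polar; ring.
  move/eqP; rewrite !mulf_eq0 (negPf p2_neq0) (negPf lin_neq0) pnatr_eq0 /= orbF.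
  by rewrite subr_eq0 => /eqP.
subst q3.
have [t [p3E r3E]] : exists t, p3 = t * (4%:R - k ^+ 3) /\ r3 = - (t * (6%:R * k ^+ 2)).
  apply: dot2_eq0.
    rewrite xpair_eqE negb_and mulf_eq0 pnatr_eq0 expf_eq0 /=.
    by case: eqP => [->|//]; rewrite expr0n subr0 pnatr_eq0.
  have s2_neq0 : 2%:R * s ^+ 2 != 0 by rewrite mulf_neq0 ?pnatr_eq0 ?expf_neq0.
  apply: (mulfI s2_neq0).
  by rewrite mulr0 -c201 /hesse_polar; ring.
subst p3 r3.
have lamE : lam = 24%:R * p2 ^+ 2 * t * (k ^+ 3 - 1).
  by move: c021; rewrite c021E => c021; apply: (@mulfI _ 3%:R); [rewrite pnatr_eq0|lra].
have t_neq0 : t != 0 by apply: contraNneq lam_neq0 => t0; apply/eqP; rewrite lamE t0; ring.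
exists (2%:R * t ^+ 2 / (3%:R * p2 ^+ 2)).
  by rewrite divr_gt0 // mulr_gt0 ?ltr0n // exprn_even_gt0 //= ?t_neq0 ?p2_neq0 orbT.
apply: (mulfI lam_neq0); rewrite -c003 {1}lamE /hesse.
by field; rewrite p2_neq0.
Qed.

Lemma hesse_to_weier_rotate (R : comPzRingType) (k lam a b p1 q1 r1 p2 q2 r2 p3 q3 r3 : R) :
  hesse_to_weier k lam a b p1 q1 r1 p2 q2 r2 p3 q3 r3 ->
  hesse_to_weier k lam a b q1 r1 p1 q2 r2 p2 q3 r3 p3.
Proof. by move=> to_weier w0 w1 w2; rewrite -to_weier /hesse; ring. Qed.

Lemma noncollinear_rotate (R : pzRingType) (p1 q1 r1 p2 q2 r2 p3 q3 r3 : R) :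
  noncollinear p1 q1 r1 p2 q2 r2 p3 q3 r3 -> noncollinear q1 r1 p1 q2 r2 p2 q3 r3 p3.
Proof.
move=> ncol u1 u2 u3 e1 e2 e3.
have [-> -> ->] : [/\ u3 = 0, u1 = 0 & u2 = 0] by apply: ncol; rewrite -addrA addrC.
by split.
Qed.

Lemma hesse_to_weier_b (R : realFieldType) (k lam a b p1 q1 r1 p2 q2 r2 p3 q3 r3 : R) :
  k != 1 -> lam != 0 ->
  hesse_to_weier k lam a b p1 q1 r1 p2 q2 r2 p3 q3 r3 ->
  noncollinear p1 q1 r1 p2 q2 r2 p3 q3 r3 ->
  exists2 c, 0 < c & b = c * (k ^+ 6 - 20%:R * k ^+ 3 - 8%:R).
Proof.
move=> k_neq1 lam_neq0 to_weier ncol.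
have [[c300 c030 _] _ _] := hesse_to_weier_coef to_weier.
have P1_neq0 : (p1, q1, r1) != (0, 0, 0).
  by apply: contra_neq lam_neq0; rewrite -c300 => -[-> -> ->]; rewrite /hesse; ring.
have := hesse_flex_on_axis k_neq1 c030 P1_neq0 (hesse_polar_P1P2_eq0 to_weier ncol).
move/eqP; rewrite !mulf_eq0 => /orP[/orP[]|] /eqP P2_axis; rewrite P2_axis in to_weier ncol.
- exact: hesse_to_weier_axis_b lam_neq0 (hesse_to_weier_rotate to_weier) (noncollinear_rotate ncol).
- exact: hesse_to_weier_axis_b lam_neq0 (hesse_to_weier_rotate (hesse_to_weier_rotate to_weier))
    (noncollinear_rotate (noncollinear_rotate ncol)).
- exact: hesse_to_weier_axis_b lam_neq0 to_weier ncol.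
Qed.

Lemma ord3P (i : 'I_3) : [\/ i = inord 0, i = inord 1 | i = inord 2].
Proof.
by case: i => [[|[|[|//]]] ?]; [constructor 1 | constructor 2 | constructor 3];
  apply/val_inj; rewrite /= inordK.
Qed.

Lemma big_ord3 (R : nmodType) (F : 'I_3 -> R) :
  \sum_(i < 3) F i = F (inord 0) + F (inord 1) + F (inord 2).
Proof.
rewrite !big_ord_recl big_ord0 addr0 addrA.
by congr (F _ + F _ + F _); apply/val_inj; rewrite /= inordK.
Qed.

Definition col3 {R : pzRingType} (x y z : R) : 'cV[R]_3 := \col_i [:: x; y; z]`_i.

Lemma mulmx_col3 (R : pzRingType) (N : 'M[R]_3) (x y z : R) i :
  (N *m col3 x y z) i 0 = N i (inord 0) * x + N i (inord 1) * y + N i (inord 2) * z.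
Proof. by rewrite mxE big_ord3 !mxE !inordK. Qed.

Section InverseFrame.

Variables (R : fieldType) (M : 'M[R]_3).
Hypothesis M_unit : M \in unitmx.
Local Notation n i j := (invmx M (@inord 2 i) (@inord 2 j)).

Lemma hesse_to_weier_invmx (k lam a b : R) :
  (forall v, hesse_form k v = lam * weier_form a b (M *m v)) ->
  hesse_to_weier k lam a b (n 0 0) (n 1 0) (n 2 0) (n 0 1) (n 1 1) (n 2 1)
                           (n 0 2) (n 1 2) (n 2 2).
Proof.
move=> to_weier w0 w1 w2; have := to_weier (invmx M *m col3 w0 w1 w2).
by rewrite mulmxA mulmxV // mul1mx /hesse_form /weier_form /cx /cy /cz !mulmx_col3 !mxE !inordK.
Qed.

Lemma noncollinear_invmx :
  noncollinear (n 0 0) (n 1 0) (n 2 0) (n 0 1) (n 1 1) (n 2 1) (n 0 2) (n 1 2) (n 2 2).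
Proof.
move=> u1 u2 u3 e1 e2 e3.
have trN_unit : (invmx M)^T \in unitmx by rewrite unitmx_tr unitmx_inv.
have Nu0 : (invmx M)^T *m col3 u1 u2 u3 = 0.
  apply/matrixP => i j; rewrite ord1 mulmx_col3 !mxE.
  by case: (ord3P i) => ->; [rewrite -e1 | rewrite -e2 | rewrite -e3]; ring.
have /matrixP u0 : col3 u1 u2 u3 = 0.
  by rewrite -(mulKmx trN_unit (col3 u1 u2 u3)) Nu0 mulmx0.
by split; [have := u0 (inord 0) 0 | have := u0 (inord 1) 0 | have := u0 (inord 2) 0];
  rewrite !mxE inordK.
Qed.

End InverseFrame.

Lemma hesse_disc_factor (R : rcfType) (k : R) :
  exists2 d, 0 < d & k ^+ 6 - 20%:R * k ^+ 3 - 8%:R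
    = d * ((k - (1 - Num.sqrt 3%:R)) * (k - (1 + Num.sqrt 3%:R))).
Proof.
set s := Num.sqrt 3%:R; set al := 1 - s; set be := 1 + s.
have s2 : s ^+ 2 = 3%:R by rewrite sqr_sqrtr // ler0n.
have s_gt0 : 0 < s by rewrite sqrtr_gt0 ltr0n.
have al_neq0 : al != 0.
  apply/eqP => al0; have s1 : s = 1 by move: al0; rewrite /al; lra.
  by move: s2; rewrite s1 expr1n; lra.
have be_neq0 : be != 0 by rewrite /be; apply/eqP; lra.
exists ((k ^+ 2 + k * al + al ^+ 2) * (k ^+ 2 + k * be + be ^+ 2)).
  by rewrite mulr_gt0 ?cubic_factor_gt0.
transitivity (k ^+ 6 - k ^+ 3 * (2%:R + 6%:R * s ^+ 2) + (1 - s ^+ 2) ^+ 3).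
  by rewrite s2; ring.
by rewrite /al /be; ring.
Qed.

Lemma sign_root_product (R : realDomainType) (b d al be k : R) :
  0 < d -> al < be -> b = d * ((k - al) * (k - be)) ->
  [/\ b < 0 <-> al < k < be, b = 0 <-> k = al \/ k = be & 0 < b <-> k < al \/ be < k].
Proof.
move=> d_gt0 al_lt_be ->; split.
- rewrite pmulr_rlt0 //; split; first by move=> h; apply/andP; split; nra.
  by case/andP; nra.
- split; last by case=> ->; rewrite subrr ?mulr0 ?mul0r ?mulr0.
  move/eqP; rewrite mulf_eq0 (gt_eqF d_gt0) /= mulf_eq0 !subr_eq0.
  by case/orP => /eqP ->; [left | right].
- rewrite pmulr_rgt0 //; split; last by case; nra.
  by move=> h; case: (ltrP k al) => [|al_le_k]; [left | right; nra].
Qed.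

Unset Implicit Arguments.

Theorem lemma6p4 (R : rcfType) (k : R) (M : 'M[R]_3) (a b : R) :
  k != 1 ->
  puts_in_normal_form k M a b ->
  [/\ (b < 0 <-> 1 - Num.sqrt 3%:R < k < 1 + Num.sqrt 3%:R),
      (b = 0 <-> k = 1 - Num.sqrt 3%:R \/ k = 1 + Num.sqrt 3%:R) &
      (0 < b <-> k < 1 - Num.sqrt 3%:R \/ 1 + Num.sqrt 3%:R < k)].
Proof.
move=> k_neq1 [M_unit [lam lam_neq0 to_weier]].
have [c c_gt0 ->] := hesse_to_weier_b k_neq1 lam_neq0
  (hesse_to_weier_invmx M_unit to_weier) (noncollinear_invmx M_unit).
have [d d_gt0 ->] := hesse_disc_factor k.
apply: (@sign_root_product _ _ (c * d)); [exact: mulr_gt0 | | exact: mulrA].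
by rewrite ltrD2l gtrN // sqrtr_gt0 ltr0n.
Qed.
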